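(* Let $X\subseteq I$ be an itemset and let $W$ be any descendant of $X$ in the set-enumeration tree. Then $$u(W)\le SUM(X.pu)+SUM(X.rpu).$$
   Context: Let $I$ be a finite set of items. An uncertain database $D=\{T_1,\dots,T_n\}$ is a finite collection of transactions with each $T_c\subseteq I$. Each item $i\in T_c$ has a quantity $q(i,T_c)>0$ and an existence probability $p(i,T_c)\in(0,1]$. Each item $i\in I$ has an external utility $pr(i)\in\mathbb{R}$, which may be positive or negative. Utility quantities: - $u(i,T_c)=pr(i)\,q(i,T_c)$. - For $X\subseteq T_c$: $u(X,T_c)=\sum_{i\in X}u(i,T_c)$. - $u(X)=\sum_{T_c\in D,\ X\subseteq T_c}u(X,T_c)$. Fix a total processing order on $I$. The paper sorts items by ascending $RTWU$ and places all items with negative external utility after the others. The set-enumeration tree has root $\emptyset$, and the children of a node $X$ are the sets $X\cup\{i\}$ with $i$ after every item of $X$. Hence the descendants of $X$ are the itemsets $W\supsetneq X$ such that every item of $W\setminus X$ comes after every item of $X$. For $X\subseteq T_c$ define: - $pu(X,T_c)=\sum_{i\in X,\ pr(i)>0}u(i,T_c)$; - $rpu(X,T_c)=\sum u(i,T_c)$ over $i\in T_c$ with $pr(i)>0$ and $i$ after every item of $X$. Finally $SUM(X.pu)=\sum_{T_c\in D,\ X\subseteq T_c}pu(X,T_c)$ and $SUM(X.rpu)=\sum_{T_c\in D,\ X\subseteq T_c}rpu(X,T_c)$. *)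

From HB Require Import structures.
From mathcomp Require Import all_boot all_order all_algebra.
Set Implicit Arguments. Unset Strict Implicit. Unset Printing Implicit Defensive.
Import Order.TTheory GRing.Theory Num.Theory.
Local Open Scope ring_scope.

(* Database D = {T_0,...,T_{n-1}}, transactions
   indexed by 'I_n, T c : {set I}.  q c i = q(i,T_c), pr i = external utility.
   The total processing order on I is given by an injective rank
   rk : I -> nat; "i comes after j" means (rk j < rk i). *)

Section Utility.
Variables (R : realFieldType) (I : finType) (n : nat).
Variables (T : 'I_n -> {set I}) (q : 'I_n -> I -> R) (pr : I -> R)
          (rk : I -> nat).

Definition u_item (i : I) (c : 'I_n) : R := pr i * q c i.

Definition u_set (X : {set I}) (c : 'I_n) : R := \sum_(i in X) u_item i c.

Definition u_db (X : {set I}) : R :=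
  \sum_(c < n | X \subset T c) u_set X c.

Definition after_all (X : {set I}) (i : I) : bool :=
  [forall j in X, (rk j < rk i)%N].

Definition pu (X : {set I}) (c : 'I_n) : R :=
  \sum_(i in X | 0 < pr i) u_item i c.

Definition rpu (X : {set I}) (c : 'I_n) : R :=
  \sum_(i in T c | (0 < pr i) && after_all X i) u_item i c.

Definition SUM_pu (X : {set I}) : R := \sum_(c < n | X \subset T c) pu X c.
Definition SUM_rpu (X : {set I}) : R := \sum_(c < n | X \subset T c) rpu X c.

Definition descendant (X W : {set I}) : bool :=
  (X \proper W) && [forall i in W :\: X, after_all X i].

End Utility.

(* Split u(W,T_c) into the part on X and the part on W \ X.  Dropping the
   items of negative utility can only increase each part; what remains of the
   first is pu(X,T_c), and what remains of the second consists of positive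
   items of T_c that come after every item of X, so it is bounded by
   rpu(X,T_c).  Summing over the transactions containing W, which are among
   those containing X, and using pu + rpu >= 0 gives the bound.  Neither the
   existence probabilities nor the injectivity of the processing order play a
   role. *)

From HB Require Import structures.
From mathcomp Require Import all_boot all_order all_algebra.
Set Implicit Arguments. Unset Strict Implicit. Unset Printing Implicit Defensive.
Import Order.TTheory GRing.Theory Num.Theory.
Local Open Scope ring_scope.

Lemma ler_sum_cond (R : numDomainType) (I : finType) (P Q : pred I)
    (F : I -> R) :
  (forall i, P i -> ~~ Q i -> F i <= 0) ->
  (forall i, Q i -> ~~ P i -> 0 <= F i) ->
  \sum_(i | P i) F i <= \sum_(i | Q i) F i.
Proof.
move=> F_le0 F_ge0; rewrite (bigID Q P) [X in _ <= X](bigID P Q) /=.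
rewrite (eq_bigl (fun i => Q i && P i)) => [|i]; last exact: andbC.
rewrite lerD2l; apply: (@le_trans _ _ 0).
- by apply: sumr_le0 => i /andP[]; apply: F_le0.
- by apply: sumr_ge0 => i /andP[]; apply: F_ge0.
Qed.

Section TransactionUtility.

Variables (R : realFieldType) (I : finType) (n : nat).
Variables (T : 'I_n -> {set I}) (q : 'I_n -> I -> R) (pr : I -> R)
          (rk : I -> nat).
Hypothesis q_pos : forall c i, i \in T c -> 0 < q c i.

Lemma u_item_ge0 c i : i \in T c -> 0 <= pr i -> 0 <= u_item q pr i c.
Proof. by move=> iT pr_ge0; rewrite mulr_ge0 // ltW ?q_pos. Qed.

Lemma u_item_le0 c i : i \in T c -> pr i <= 0 -> u_item q pr i c <= 0.
Proof. by move=> iT pr_le0; rewrite mulr_le0_ge0 // ltW ?q_pos. Qed.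

Lemma pu_ge0 (X : {set I}) c : X \subset T c -> 0 <= pu q pr X c.
Proof.
move=> XT; apply: sumr_ge0 => i /andP[iX pr_gt0].
by rewrite u_item_ge0 ?(subsetP XT) ?ltW.
Qed.

Lemma rpu_ge0 (X : {set I}) c : 0 <= rpu T q pr rk X c.
Proof.
by apply: sumr_ge0 => i /and3P[iT pr_gt0 _]; rewrite u_item_ge0 ?ltW.
Qed.

Lemma u_set_le_pu (X : {set I}) c :
  X \subset T c -> u_set q pr X c <= pu q pr X c.
Proof.
move=> XT; apply: ler_sum_cond => i; last by case/andP => ->.
by move=> iX; rewrite iX -leNgt; apply: u_item_le0; rewrite (subsetP XT).
Qed.

Lemma u_set_le_rpu (X Y : {set I}) c :
    Y \subset T c -> {in Y, forall i, after_all rk X i} ->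
  u_set q pr Y c <= rpu T q pr rk X c.
Proof.
move=> YT Y_after; apply: ler_sum_cond => i.
- move=> iY; rewrite (subsetP YT) // Y_after // andbT /= -leNgt.
  by apply: u_item_le0; rewrite (subsetP YT).
- by move=> /and3P[iT pr_gt0 _] _; rewrite u_item_ge0 ?ltW.
Qed.

Lemma u_set_le_pu_rpu (X W : {set I}) c :
    descendant rk X W -> W \subset T c ->
  u_set q pr W c <= pu q pr X c + rpu T q pr rk X c.
Proof.
move=> /andP[/proper_sub XW /forallP WX_after] WT.
rewrite /u_set (big_setID X) /= (setIidPr XW); apply: lerD.
- by apply: u_set_le_pu; apply: subset_trans WT.
- apply: u_set_le_rpu => [|i iWX]; first exact: subset_trans (subsetDl W X) WT.
  by have /implyP := WX_after i; apply.
Qed.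

End TransactionUtility.

Theorem lemma3 (R : realFieldType) (I : finType) (n : nat)
  (T : 'I_n -> {set I}) (q p : 'I_n -> I -> R) (pr : I -> R)
  (rk : I -> nat)
  (rk_inj : injective rk)
  (q_pos : forall c i, i \in T c -> 0 < q c i)
  (p_range : forall c i, i \in T c -> 0 < p c i <= 1)
  (X W : {set I})
  (hW : descendant rk X W) :
  u_db T q pr W <= SUM_pu T q pr X + SUM_rpu T q pr rk X.
Proof.
have /proper_sub XW : X \proper W by case/andP: hW.
rewrite /u_db /SUM_pu /SUM_rpu -big_split /=.
apply: (@le_trans _ _
  (\sum_(c < n | W \subset T c) (pu q pr X c + rpu T q pr rk X c))).
- by apply: ler_sum => c WT; apply: (u_set_le_pu_rpu pr q_pos hW WT).
- apply: ler_sum_cond => c; first by move=> WT; rewrite (subset_trans XW WT).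
  by move=> XT _; rewrite addr_ge0 ?(pu_ge0 pr q_pos XT) ?(rpu_ge0 pr rk q_pos).
Qed.
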